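(* Let $z\in L_T$ and suppose that \[h_T(z)=\sum_{j=1}^n q\frac{|y_{j-1}-y_j|}{\xi_T(y_j)}\] for distinct points $y_0,\dots,y_n\in L_T$ with $y_0=z$ and $y_n=0$. Then for any $k\in\{1,\dots,n\}$, \[h_T(y_k)=\sum_{j=k+1}^n q\frac{|y_{j-1}-y_j|}{\xi_T(y_j)}.\] Moreover, the sequence $(\xi_T(y_j))_{j\ge1}$ is non-increasing.
   Context: $(\xi(z))_{z\in\mathbb{Z}^d}$ is a positive potential (i.i.d. Pareto with parameter $\alpha>d$, i.e. $\mathbb{P}(\xi(z)>x)=x^{-\alpha}$ for $x\ge1$). $|\cdot|$ is the $\ell_1$-norm. $q=d/(\alpha-d)$, $a(T)=(T/\log T)^q$, $r(T)=(T/\log T)^{q+1}$, $L_T=\{z\in\mathbb{R}^d:r(T)z\in\mathbb{Z}^d\}$, $\xi_T(z)=\xi(r(T)z)/a(T)$. For $z\in L_T$, \[h_T(z)=\inf\Big\{\sum_{j=1}^n q\frac{|y_{j-1}-y_j|}{\xi_T(y_j)}: n\ge0,\ y_0,\dots,y_n\in L_T,\ y_0=z,\ y_n=0\Big\}.\] *)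

From HB Require Import structures.
From mathcomp Require Import all_boot all_order all_algebra.
From mathcomp Require Import all_classical all_reals all_analysis.
Set Implicit Arguments. Unset Strict Implicit. Unset Printing Implicit Defensive.
Import Order.TTheory GRing.Theory Num.Theory.
Local Open Scope classical_set_scope.
Local Open Scope ring_scope.

Definition qexp (R : realType) (d : nat) (alpha : R) : R := d%:R / (alpha - d%:R).

Definition aT (R : realType) (d : nat) (alpha T : R) : R :=
  (T / ln T) `^ (qexp d alpha).
Definition rT (R : realType) (d : nat) (alpha T : R) : R :=
  (T / ln T) `^ (qexp d alpha + 1).

Definition l1 (R : realType) (d : nat) (x : 'rV[R]_d) : R :=
  \sum_(i < d) `|x ord0 i|.

Definition inLT (R : realType) (d : nat) (alpha T : R) (z : 'rV[R]_d) : Prop :=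
  forall i : 'I_d, rT d alpha T * z ord0 i \is a Num.int.

(* xi_T(z) = xi(r(T) z) / a(T); for z in L_T, r(T) z is an integer vector,
   recovered exactly by the coordinatewise floor. *)
Definition xiT (R : realType) (d : nat) (alpha T : R) (xi : 'rV[int]_d -> R)
  (z : 'rV[R]_d) : R :=
  xi (\row_i Num.floor (rT d alpha T * z ord0 i)) / aT d alpha T.

(* cost of the path y0 = z, y1, ..., yn (ys = [:: y1; ...; yn]):
   sum_{j=1}^n q |y_{j-1} - y_j| / xi_T(y_j) *)
Fixpoint pcost (R : realType) (d : nat) (alpha T : R) (xi : 'rV[int]_d -> R)
  (z : 'rV[R]_d) (ys : seq 'rV[R]_d) : R :=
  match ys with
  | [::] => 0
  | y :: ys' => qexp d alpha * l1 (z - y) / xiT alpha T xi y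
                + pcost alpha T xi y ys'
  end.

Definition admissible (R : realType) (d : nat) (alpha T : R)
  (z : 'rV[R]_d) (ys : seq 'rV[R]_d) : Prop :=
  (forall y, y \in z :: ys -> inLT alpha T y) /\ last z ys = 0.

Definition hT (R : realType) (d : nat) (alpha T : R) (xi : 'rV[int]_d -> R)
  (z : 'rV[R]_d) : R :=
  inf [set s : R | exists ys, admissible alpha T z ys /\ s = pcost alpha T xi z ys].

From HB Require Import structures.
From mathcomp Require Import all_boot all_order all_algebra.
From mathcomp Require Import all_classical all_reals all_analysis.
From mathcomp Require Import lra.
Set Implicit Arguments. Unset Strict Implicit.
Import Order.TTheory GRing.Theory Num.Theory.
Local Open Scope ring_scope.

(* Optimality is inherited by suffixes: a cheaper path from [y_k] could be
   spliced onto the first [k] steps, beating the optimal path from [z].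
   For monotonicity, skipping [y_j] is admissible, so the detour
   [y_(j-1) -> y_j -> y_(j+1)] costs at most the direct step; combined with
   the triangle inequality this gives
   [|y_(j-1) - y_j| / xi_T(y_j) <= |y_(j-1) - y_j| / xi_T(y_(j+1))],
   and distinctness makes [|y_(j-1) - y_j|] positive. *)

Lemma last_take_nth (T : Type) (x : T) (s : seq T) (k : nat) :
  (k <= size s)%N -> last x (take k s) = nth x (x :: s) k.
Proof.
elim: s x k => [|y s IH] x [|k] //= hk.
by rewrite IH // (set_nth_default x).
Qed.

Section L1Norm.
Variables (R : realType) (d : nat).
Implicit Types x y w : 'rV[R]_d.

Lemma l1_ge0 x : 0 <= l1 x.
Proof. by apply: sumr_ge0 => i _. Qed.

Lemma l1_subr_le w x y : l1 (w - y) <= l1 (w - x) + l1 (x - y).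
Proof.
rewrite /l1 -big_split /=; apply: ler_sum => i _.
have := ler_normD (w ord0 i - x ord0 i) (x ord0 i - y ord0 i).
by rewrite !mxE addrA subrK.
Qed.

Lemma l1_gt0 x : x != 0 -> 0 < l1 x.
Proof.
move=> hx; rewrite lt_def l1_ge0 andbT; apply: contra hx => /eqP/psumr_eq0P x0.
apply/eqP/matrixP => i j; rewrite (ord1 i) mxE.
by apply/normr0_eq0/x0.
Qed.

Lemma l1_gt0_dim x : 0 < l1 x -> (0 < d)%N.
Proof. by case: d x => // x; rewrite /l1 big_ord0 ltxx. Qed.

End L1Norm.

Section OptimalPaths.
Variables (R : realType) (d : nat) (alpha T : R) (xi : 'rV[int]_d -> R).
Hypothesis xi_gt0 : forall x, 0 < xi x.
Hypothesis d_lt_alpha : d%:R < alpha.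
Hypothesis T_gt1 : 1 < T.

Local Notation q := (qexp d alpha).
Local Notation xiT := (xiT alpha T xi).
Local Notation cost := (pcost alpha T xi).
Local Notation h := (hT alpha T xi).
Local Notation adm := (admissible alpha T).

Implicit Types (w x y z : 'rV[R]_d) (s t : seq 'rV[R]_d).

Lemma qexp_ge0 : 0 <= q.
Proof. by rewrite divr_ge0 // subr_ge0 ltW. Qed.

Lemma qexp_gt0 : (0 < d)%N -> 0 < q.
Proof. by move=> d_gt0; rewrite divr_gt0 ?ltr0n // subr_gt0. Qed.

Lemma aT_gt0 : 0 < aT d alpha T.
Proof. by rewrite powR_gt0 // divr_gt0 ?ln_gt0 // (lt_trans ltr01). Qed.

Lemma xiT_gt0 y : 0 < xiT y.
Proof. exact: divr_gt0 (xi_gt0 _) aT_gt0. Qed.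

Lemma pcost_cat z s1 s2 : cost z (s1 ++ s2) = cost z s1 + cost (last z s1) s2.
Proof. by elim: s1 z => [|y s IH] z /=; rewrite ?add0r // IH addrA. Qed.

Lemma pcost_ge0 z s : 0 <= cost z s.
Proof.
elim: s z => [|y s IH] z //=.
apply: addr_ge0 (IH _); apply: divr_ge0.
  exact: mulr_ge0 qexp_ge0 (l1_ge0 _).
exact/ltW/xiT_gt0.
Qed.

Lemma hT_le_pcost z s : adm z s -> h z <= cost z s.
Proof.
move=> zs; apply: ge_inf; last by exists s.
by exists 0 => _ [t [_ ->]]; exact: pcost_ge0.
Qed.

Lemma hT_eq_pcost z s : adm z s ->
  (forall t, adm z t -> cost z s <= cost z t) -> h z = cost z s.
Proof.
move=> zs s_min; apply/eqP; rewrite eq_le hT_le_pcost //=.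
apply: lb_le_inf; first by exists (cost z s), s.
by move=> _ [t [zt ->]]; exact: s_min.
Qed.

Lemma admissible_suffix z s1 s2 : adm z (s1 ++ s2) -> adm (last z s1) s2.
Proof.
case=> inL last0; split; last by rewrite -last_cat.
move=> y; rewrite inE => /predU1P [->|ys2]; apply: inL.
  by move: (mem_last z s1); rewrite !inE mem_cat => /predU1P [->|->]; rewrite ?eqxx ?orbT.
by rewrite inE mem_cat ys2 !orbT.
Qed.

Lemma admissible_splice z s1 s2 t : adm z (s1 ++ s2) -> adm (last z s1) t ->
  adm z (s1 ++ t).
Proof.
case=> inL _ [inLt last0]; split; last by rewrite last_cat.
move=> y; rewrite inE mem_cat => /or3P [/eqP ->|ys1|yt].
- by apply: inL; rewrite mem_head.
- by apply: inL; rewrite inE mem_cat ys1 orbT.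
- by apply: inLt; rewrite inE yt orbT.
Qed.

Lemma admissible_sub z s t : adm z s -> {subset t <= s} -> last z t = 0 -> adm z t.
Proof.
case=> inL _ ts last0; split => // y; rewrite inE => /predU1P [->|yt].
  by apply: inL; rewrite mem_head.
by apply: inL; rewrite inE ts ?orbT.
Qed.

Lemma optimal_suffix z s1 s2 : adm z (s1 ++ s2) -> h z = cost z (s1 ++ s2) ->
  h (last z s1) = cost (last z s1) s2.
Proof.
move=> zs opt; apply: hT_eq_pcost; first exact: admissible_suffix zs.
move=> t adm_t; rewrite -(lerD2l (cost z s1)) -!pcost_cat -opt.
exact/hT_le_pcost/(admissible_splice zs).
Qed.

Lemma optimal_xiT_noninc z p x y r : adm z (p ++ x :: y :: r) ->
  h z = cost z (p ++ x :: y :: r) -> last z p != x -> xiT y <= xiT x.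
Proof.
set w := last z p => zs opt wx.
have skip_x : adm z (p ++ y :: r).
  apply: (admissible_sub zs) => [u|]; last by case: zs; rewrite !last_cat.
  by rewrite !mem_cat !inE => /or3P [->|->|->]; rewrite ?orbT.
have detour_le : q * l1 (w - x) / xiT x + q * l1 (x - y) / xiT y <=
                 q * l1 (w - y) / xiT y.
  have := hT_le_pcost skip_x; rewrite opt !pcost_cat lerD2l /=.
  by rewrite addrA lerD2r.
have wx_gt0 : 0 < l1 (w - x) by rewrite l1_gt0 // subr_eq0.
have q_gt0 := qexp_gt0 (l1_gt0_dim wx_gt0).
have [x_gt0 y_gt0] := (xiT_gt0 x, xiT_gt0 y).
have direct_le : q * l1 (w - y) / xiT y <=
                 q * l1 (w - x) / xiT y + q * l1 (x - y) / xiT y.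
  by rewrite -mulrDl -mulrDr ler_pM2r ?invr_gt0 // ler_pM2l // l1_subr_le.
have : q * l1 (w - x) / xiT x <= q * l1 (w - x) / xiT y by lra.
by rewrite ler_pM2l ?(mulr_gt0 q_gt0) // lef_pV2 ?posrE.
Qed.

End OptimalPaths.

Theorem lemma3p3 (R : realType) (d : nat) (alpha T : R)
  (xi : 'rV[int]_d -> R)
  (hxi : forall x, 0 < xi x)
  (halpha : d%:R < alpha) (hT1 : 1 < T)
  (z : 'rV[R]_d) (ys : seq 'rV[R]_d)
  (hz : inLT alpha T z)
  (hys : forall y, y \in ys -> inLT alpha T y)
  (hlast : last z ys = 0)
  (huniq : uniq (z :: ys))
  (hopt : hT alpha T xi z = pcost alpha T xi z ys) :
  (forall k : nat, (1 <= k <= size ys)%N ->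
     hT alpha T xi (nth 0 (z :: ys) k) = pcost alpha T xi (nth 0 (z :: ys) k) (drop k ys))
  /\
  (forall j : nat, (1 <= j)%N -> (j < size ys)%N ->
     xiT alpha T xi (nth 0 (z :: ys) j.+1) <= xiT alpha T xi (nth 0 (z :: ys) j)).
Proof.
have zys : admissible alpha T z ys.
  by split=> // y; rewrite inE => /predU1P [->|/hys].
split=> [k /andP [_ k_le] | [//|i] _ i_lt].
  rewrite (set_nth_default z) ?ltnS // -last_take_nth //.
  by apply: (optimal_suffix hxi halpha hT1); rewrite cat_take_drop.
have ys_split : ys = take i ys ++ nth 0 ys i :: nth 0 ys i.+1 :: drop i.+2 ys.
  by rewrite -(drop_nth 0 i_lt) -(drop_nth 0 (ltnW i_lt)) cat_take_drop.
rewrite ys_split in zys hopt huniq; apply: (optimal_xiT_noninc hxi halpha hT1 zys hopt).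
move: huniq; rewrite -cat_cons cat_uniq => /and3P [_ /norP [+ _] _].
by apply: contraNneq => <-; rewrite mem_last.
Qed.
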